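(* Let $n\ge1$, $m\ge1$, and let $I_m\subset S_m$ be a nonzero subspace spanned by an initial segment of degree-$m$ monomials with respect to the degree reverse lexicographic order (with $x_0\succ x_1\succ\cdots\succ x_n$). (1) For any $l>0$, $S_lI_m$ is spanned by an initial reverse lexicographic segment of degree-$(m+l)$ monomials if and only if $\dim_kI_m\ge\binom{n+m-1}{m}$, if and only if $x_{n-1}^m\in I_m$. (2) Suppose $x_{n-1}^m\in I_m$. Then for every $l\ge0$, $\dim_kS_m-\dim_kI_m=\dim_kS_{m+l}-\dim_kS_lI_m$. In particular, if $J\subset S$ is a homogeneous ideal generated in degrees $\le m$ with $J_m=I_m$, then the Hilbert polynomial of $S/J$ is constant.
   Context: $S=k[x_0,\dots,x_n]=\bigoplus_m S_m$ over an algebraically closed field $k$ of characteristic zero; $S_lI_m$ denotes the span of products $fg$, $f\in S_l$, $g\in I_m$. The degree reverse lexicographic order with $x_0\succ\cdots\succ x_n$: for monomials of the same degree, $x^\alpha\succ x^\beta$ iff the last nonzero entry of $\alpha-\beta$ is negative. An initial segment of degree $t$ is the set of the first $\ell$ monomials of degree $t$ in this order, for some $\ell$. *)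

From HB Require Import structures.
From mathcomp Require Import all_boot all_order all_algebra.
Set Implicit Arguments. Unset Strict Implicit. Unset Printing Implicit Defensive.
Import Order.TTheory GRing.Theory Num.Theory.
Local Open Scope ring_scope.

(* Monomials of degree t in the n+1 variables x_0, ..., x_n,
   represented by their exponent vectors. *)
Definition mon (n t : nat) :=
  {a : {ffun 'I_n.+1 -> 'I_t.+1} | (\sum_i (a i : nat))%N == t}.
HB.instance Definition _ n t := Finite.on (mon n t).

(* The degree-t homogeneous component S_t of S = k[x_0..x_n], identified
   with its coordinate space in the monomial basis. *)
Definition homog (k : fieldType) (n t : nat) := {ffun mon n t -> k^o}.

Definition xmon (k : fieldType) (n t : nat) (a : mon n t) : homog k n t :=
  [ffun b : mon n t => (if b == a then 1 else 0 : k^o)].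

(* Multiplication S_l x S_m -> S_t (it is zero unless t = l + m). *)
Definition mulh (k : fieldType) (n l m t : nat) (f : homog k n l) (g : homog k n m)
  : homog k n t :=
  [ffun c : mon n t => \sum_(a : mon n l) \sum_(b : mon n m |
       [forall i, ((val a i : nat) + val b i == val c i)%N]) (f a * g b : k^o)].

Definition SmulI (k : fieldType) (n l m t : nat) (I : {vspace homog k n m})
  : {vspace homog k n t} :=
  <<[seq mulh t f g | f <- (vbasis (fullv : {vspace homog k n l}) : seq _),
                      g <- (vbasis I : seq _)]>>%VS.

Definition revlex_gt (n t : nat) (a b : mon n t) : bool :=
  [exists i : 'I_n.+1, ((val a i : nat) < val b i)%N &&
     [forall j : 'I_n.+1, (i < j)%N ==> ((val a j : nat) == val b j)]].

Definition revlex_rank (n t : nat) (a : mon n t) : nat :=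
  #|[set b : mon n t | revlex_gt b a]|.

Definition mons (n t : nat) : seq (mon n t) := enum {: mon n t}.

Definition initial_segment (k : fieldType) (n t : nat) (V : {vspace homog k n t}) :=
  exists l : nat,
    V = <<[seq xmon k a | a <- mons n t &
            (revlex_rank a < l)%N]>>%VS.

Definition pure_exp (n m : nat) (j : 'I_n.+1) : {ffun 'I_n.+1 -> 'I_m.+1} :=
  [ffun i => if i == j then ord_max else ord0].

Lemma pure_exp_deg (n m : nat) (j : 'I_n.+1) :
  (\sum_i (pure_exp m j i : nat))%N == m.
Proof.
rewrite (bigD1 j) //= big1 => [|i /negbTE Hi]; rewrite /pure_exp ffunE.
  by rewrite eqxx addn0.
by rewrite Hi.
Qed.

Definition pure_mon (n m : nat) (j : 'I_n.+1) : mon n m :=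
  exist _ (pure_exp m j) (pure_exp_deg m j).

(* Everything is monomial: an initial revlex segment I_m is the span of a
   revlex-initial set p of monomials, and S_l I_m is spanned by the multiples
   of p.  The monomials >= x_(n-1)^m are exactly the C(n+m-1, m) monomials free
   of x_n, so x_(n-1)^m lies in I_m iff dim I_m >= C(n+m-1, m).  If it does, a
   monomial of degree m+l is in S_l I_m iff either x_n^l does not divide it, or
   it is x_n^l times a monomial of p.  So multiplication by x_n^l is a
   revlex-preserving bijection from the monomials outside I_m onto those
   outside S_l I_m, which yields both the segment property and the constant
   codimension.  If it does not, x_n^l b (b in p) lies in S_l I_m while
   x_(n-1)^(m+l), which precedes it, does not.  Finally an ideal generated in
   degrees <= m satisfies J_(m+l) = S_l J_m. *)

From HB Require Import structures.
From mathcomp Require Import all_boot all_order all_algebra all_field.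
From mathcomp Require Import zify.
Import Order.TTheory GRing.Theory Num.Theory.
Set Implicit Arguments. Unset Strict Implicit. Unset Printing Implicit Defensive.
Local Open Scope ring_scope.

Section Exponents.
Variable n : nat.

Definition expo t (a : mon n t) (i : 'I_n.+1) : nat := val a i.

Lemma sum_expo t (a : mon n t) : (\sum_i expo a i)%N = t.
Proof. exact/eqP/(valP a). Qed.

Lemma expo_inj t (a b : mon n t) : expo a =1 expo b -> a = b.
Proof. by move=> eq_ab; apply/val_inj/ffunP => i; apply/val_inj/eq_ab. Qed.

Lemma expo_le t (a : mon n t) i : (expo a i <= t)%N.
Proof. by rewrite -[X in (_ <= X)%N](sum_expo a) (bigD1 i) //= leq_addr. Qed.

Lemma expo_pure_mon t (j i : 'I_n.+1) :
  expo (pure_mon t j) i = if i == j then t else 0%N.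
Proof. by rewrite /expo /= ffunE; case: eqP. Qed.

(* The arbitrary default [pure_mon t ord0] is only returned when the entries
   of [f] do not sum to [t]. *)
Definition mon_of t (f : 'I_n.+1 -> nat) : mon n t :=
  insubd (pure_mon t ord0) [ffun i => inord (f i) : 'I_t.+1].

Lemma expo_mon_of t f : (\sum_i f i)%N = t -> expo (mon_of t f) =1 f.
Proof.
move=> sum_f i.
have le_f j : (f j <= t)%N by rewrite -sum_f (bigD1 j) //= leq_addr.
rewrite /expo /mon_of val_insubd.
have -> : (\sum_i ([ffun i => inord (f i) : 'I_t.+1] i : nat))%N == t.
  by apply/eqP; rewrite -[RHS]sum_f; apply: eq_bigr => j _; rewrite ffunE inordK ?ltnS.
by rewrite ffunE inordK ?ltnS.
Qed.

Lemma exists_minor_sum (f : 'I_n.+1 -> nat) r : (r <= \sum_i f i)%N ->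
  exists2 h : 'I_n.+1 -> nat, (forall i, h i <= f i)%N & (\sum_i h i)%N = r.
Proof.
elim: r => [|r IH] le_r_f; first by exists (fun _ => 0%N); rewrite ?big1.
have [h le_h_f sum_h] := IH (ltnW le_r_f).
have [i lt_hi] : exists i, (h i < f i)%N.
  apply/existsP; apply: contraTT le_r_f; rewrite negb_exists => /forallP ge_h.
  suff -> : (\sum_i f i = \sum_i h i)%N by rewrite sum_h ltnn.
  by apply: eq_bigr => i _; apply/eqP; rewrite eqn_leq le_h_f leqNgt ge_h.
exists (fun j => h j + (j == i))%N.
  by move=> j; case: eqP => [->|_]; rewrite ?addn1 ?addn0.
by rewrite big_split /= sum_h (bigD1 i) //= eqxx big1 ?addn0 ?addn1 // => j /negbTE ->.
Qed.

Definition revlex_gtv (u v : 'I_n.+1 -> nat) :=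
  [exists i, (u i < v i)%N && [forall j : 'I_n.+1, (i < j)%N ==> (u j == v j)]].

Lemma revlex_gtvP (u v : 'I_n.+1 -> nat) :
  reflect (exists i : 'I_n.+1,
             (u i < v i)%N /\ forall j : 'I_n.+1, (i < j)%N -> u j = v j)
          (revlex_gtv u v).
Proof.
apply: (iffP existsP) => [[i /andP[lt_uv /forallP eq_after]]|[i [lt_uv eq_after]]].
  by exists i; split => // j lt_ij; apply/eqP; move: (eq_after j); rewrite lt_ij.
by exists i; rewrite lt_uv; apply/forallP => j; apply/implyP => /eq_after ->.
Qed.

Lemma revlex_gtv_irr (u : 'I_n.+1 -> nat) : ~~ revlex_gtv u u.
Proof. by apply/existsP => -[i /andP[]]; rewrite ltnn. Qed.

Lemma revlex_gtv_trans (u v w : 'I_n.+1 -> nat) :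
  revlex_gtv u v -> revlex_gtv v w -> revlex_gtv u w.
Proof.
move=> /revlex_gtvP[i [lt_uv eq_uv]] /revlex_gtvP[j [lt_vw eq_vw]].
apply/revlex_gtvP; have [lt_ij|lt_ji|/val_inj eq_ij] := ltngtP i j.
- exists j; split; first by rewrite eq_uv.
  by move=> x lt_jx; rewrite eq_uv ?eq_vw //; apply: ltn_trans lt_jx.
- exists i; split; first by rewrite -eq_vw.
  by move=> x lt_ix; rewrite eq_uv ?eq_vw //; apply: ltn_trans lt_ix.
- subst j; exists i; split; first exact: ltn_trans lt_vw.
  by move=> x lt_ix; rewrite eq_uv ?eq_vw.
Qed.

Lemma revlex_gtv_total (u v : 'I_n.+1 -> nat) :
  (exists i, u i != v i) -> revlex_gtv u v || revlex_gtv v u.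
Proof.
case=> i0 ne_i0.
have [i ne_i max_i] := @arg_maxnP _ i0 (fun i => u i != v i) val ne_i0.
have eq_after (j : 'I_n.+1) : (i < j)%N -> u j = v j.
  by move=> lt_ij; apply/eqP; apply: contraTT lt_ij => /max_i; rewrite -leqNgt.
have [lt_uv|lt_vu|eq_uv] := ltngtP (u i) (v i).
- by apply/orP; left; apply/revlex_gtvP; exists i.
- by apply/orP; right; apply/revlex_gtvP; exists i; split=> // j /eq_after ->.
- by rewrite eq_uv eqxx in ne_i.
Qed.

Lemma revlex_gtv_addr (u v w u' v' : 'I_n.+1 -> nat) :
  (forall i, u i + w i = u' i)%N -> (forall i, v i + w i = v' i)%N ->
  revlex_gtv u' v' = revlex_gtv u v.
Proof.
move=> eq_u' eq_v'; apply/revlex_gtvP/revlex_gtvP => -[i [lt_i eq_after]]; exists i.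
  rewrite -eq_u' -eq_v' ltn_add2r in lt_i; split=> // j /eq_after.
  by rewrite -eq_u' -eq_v' => /addIn.
by rewrite -eq_u' -eq_v' ltn_add2r; split=> // j /eq_after; rewrite -eq_u' -eq_v' => ->.
Qed.

End Exponents.

Section MonomialSpan.
Variables (k : fieldType) (n t : nat).
Implicit Types (p : pred (mon n t)) (f : homog k n t).

Definition monspan p : {vspace homog k n t} :=
  <<[seq xmon k a | a <- mons n t & p a]>>%VS.

Lemma xmonE (a b : mon n t) : xmon k a b = if b == a then 1 else 0.
Proof. exact: ffunE. Qed.

Lemma homog_expand f : f = \sum_a f a *: xmon k a.
Proof.
apply/ffunP => c; rewrite sum_ffunE (bigD1 c) //= big1 => [|a ne_ac].
  by rewrite !ffunE eqxx addr0 /GRing.scale /= mulr1.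
by rewrite !ffunE eq_sym (negbTE ne_ac) /GRing.scale /= mulr0.
Qed.

Lemma mem_monspan p f : (f \in monspan p) = [forall b, ~~ p b ==> (f b == 0)].
Proof.
apply/idP/forallP => [f_in b|f_supp].
  apply/implyP => not_pb.
  move: f_in => /(coord_span (X := in_tuple _)) ->.
  rewrite sum_ffunE big1 // => i _.
  have /mapP[a] : (in_tuple [seq xmon k a | a <- mons n t & p a])`_i \in
                  [seq xmon k a | a <- mons n t & p a] by apply/mem_nth.
  rewrite mem_filter => /andP[pa _] ->; rewrite ffunE xmonE.
  by case: eqP => [eq_ba|_]; [move: not_pb; rewrite eq_ba pa | rewrite scaler0].
rewrite [f]homog_expand; apply: rpred_sum => a _.
have [pa|not_pa] := boolP (p a).
  by apply/rpredZ/memv_span/map_f; rewrite mem_filter pa mem_enum.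
by move/implyP: (f_supp a) => /(_ not_pa) /eqP ->; rewrite scale0r rpred0.
Qed.

Lemma xmon_monspan p a : (xmon k a \in monspan p) = p a.
Proof.
rewrite mem_monspan; apply/forallP/idP => [xa_supp|pa b].
  by apply: contraT => /(implyP (xa_supp a)); rewrite xmonE eqxx oner_eq0.
by apply/implyP; rewrite xmonE; have [->|] := eqVneq b a; rewrite ?pa ?eqxx.
Qed.

Lemma monspan_inj p q : monspan p = monspan q -> p =1 q.
Proof. by move=> eq_pq a; rewrite -!xmon_monspan eq_pq. Qed.

Lemma eq_monspan p q : p =1 q -> monspan p = monspan q.
Proof. by move=> eq_pq; rewrite /monspan (eq_filter eq_pq). Qed.

Lemma dim_monspan p : \dim (monspan p) = #|p|.
Proof.
set s := [seq a <- mons n t | p a].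
have uniq_s : uniq s by rewrite filter_uniq // enum_uniq.
have size_s (j : 'I_(size [seq xmon k a | a <- s])) : (j < size s)%N.
  by rewrite -(size_map (@xmon k n t)).
have free_s : free (in_tuple [seq xmon k a | a <- s]).
  apply/freeP => c sum_c0 i.
  have := congr1 (fun f : homog k n t => f (nth (pure_mon t ord0) s i)) sum_c0.
  rewrite sum_ffunE ffunE (bigD1 i) //= big1 => [|j ne_ji].
    by rewrite (nth_map (pure_mon t ord0)) // !ffunE eqxx addr0 /GRing.scale /= mulr1.
  rewrite (nth_map (pure_mon t ord0)) // !ffunE nth_uniq //.
  by rewrite (inj_eq val_inj) eq_sym (negbTE ne_ji) scaler0.
have /size_basis-> : basis_of (monspan p) (in_tuple [seq xmon k a | a <- s]).
  by rewrite /basis_of free_s eqxx.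
by rewrite size_map size_filter /mons enumT cardE /enum_mem size_filter.
Qed.

Lemma monspanT : (fullv : {vspace homog k n t}) = monspan predT.
Proof.
apply/eqP; rewrite eqEsubv subvf andbT.
by apply/subvP => f _; rewrite mem_monspan; apply/forallP.
Qed.

Lemma dim_homog : \dim (fullv : {vspace homog k n t}) = #|{: mon n t}|.
Proof. by rewrite monspanT dim_monspan; apply: eq_card. Qed.

End MonomialSpan.

Section Multiplication.
Variables (k : fieldType) (n l m t : nat).
Implicit Types (f : homog k n l) (g : homog k n m).

Lemma mulh0l g : mulh t (0 : homog k n l) g = 0.
Proof.
apply/ffunP => c; rewrite !ffunE big1 // => a _.
by rewrite big1 // => b _; rewrite ffunE mul0r.
Qed.

Lemma mulh0r f : mulh t f (0 : homog k n m) = 0.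
Proof.
apply/ffunP => c; rewrite !ffunE big1 // => a _.
by rewrite big1 // => b _; rewrite ffunE mulr0.
Qed.

Lemma mulhDl f1 f2 g : mulh t (f1 + f2) g = mulh t f1 g + mulh t f2 g.
Proof.
apply/ffunP => c; rewrite !ffunE -big_split; apply: eq_bigr => a _.
by rewrite -big_split; apply: eq_bigr => b _; rewrite ffunE mulrDl.
Qed.

Lemma mulhDr f g1 g2 : mulh t f (g1 + g2) = mulh t f g1 + mulh t f g2.
Proof.
apply/ffunP => c; rewrite !ffunE -big_split; apply: eq_bigr => a _.
by rewrite -big_split; apply: eq_bigr => b _; rewrite ffunE mulrDr.
Qed.

Lemma mulhZl x f g : mulh t (x *: f) g = x *: mulh t f g.
Proof.
apply/ffunP => c; rewrite !ffunE /GRing.scale /= mulr_sumr; apply: eq_bigr => a _.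
by rewrite mulr_sumr; apply: eq_bigr => b _; rewrite ffunE mulrA.
Qed.

Lemma mulhZr x f g : mulh t f (x *: g) = x *: mulh t f g.
Proof.
apply/ffunP => c; rewrite !ffunE /GRing.scale /= mulr_sumr; apply: eq_bigr => a _.
by rewrite mulr_sumr; apply: eq_bigr => b _; rewrite ffunE mulrCA.
Qed.

Lemma mulh_memv_span (s1 : seq (homog k n l)) (s2 : seq (homog k n m)) f g :
  f \in <<s1>>%VS -> g \in <<s2>>%VS ->
  mulh t f g \in <<[seq mulh t x y | x <- s1, y <- s2]>>%VS.
Proof.
move=> /(coord_span (X := in_tuple s1)) -> /(coord_span (X := in_tuple s2)) ->.
rewrite (big_morph (mulh t ^~ _) (fun f1 f2 => mulhDl f1 f2 _) (mulh0l _)).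
apply: rpred_sum => i _; rewrite mulhZl; apply: rpredZ.
rewrite (big_morph (mulh t _) (mulhDr _) (mulh0r _)).
apply: rpred_sum => j _; rewrite mulhZr; apply/rpredZ/memv_span/allpairsP.
by exists (s1`_i, s2`_j); split => //; apply: mem_nth.
Qed.

Lemma mulh_xmonl_coef (a : mon n l) g (c : mon n t) b :
  (forall i, expo a i + expo b i = expo c i)%N -> mulh t (xmon k a) g c = g b.
Proof.
move=> sum_ab; rewrite ffunE (bigD1 a) //= [X in _ + X]big1 => [|a' ne_a'a]; last first.
  by apply: big1 => b' _; rewrite xmonE (negbTE ne_a'a) mul0r.
rewrite addr0 (bigD1 b) /=; last by apply/forallP => i; rewrite sum_ab.
rewrite xmonE eqxx mul1r big1 ?addr0 // => b' /andP[/forallP sum_ab' ne_b'b].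
suff eq_b'b : b' = b by rewrite eq_b'b eqxx in ne_b'b.
by apply: expo_inj => i; move: (sum_ab' i) (sum_ab i) => /eqP; rewrite /expo /=; lia.
Qed.

Lemma mulh_xmon (a : mon n l) (b : mon n m) (c : mon n t) :
  (forall i, expo a i + expo b i = expo c i)%N ->
  mulh t (xmon k a) (xmon k b) = xmon k c.
Proof.
move=> sum_ab; apply/ffunP => c'.
rewrite [RHS]xmonE; have [->|ne_c'c] := eqVneq c' c.
  by rewrite (mulh_xmonl_coef _ sum_ab) xmonE eqxx.
rewrite ffunE big1 // => a' _; rewrite big1 // => b' /forallP sum_ab'.
rewrite !xmonE; have [eq_a'a|] := eqVneq a' a; last by rewrite mul0r.
have [eq_b'b|] := eqVneq b' b; last by rewrite mulr0.
suff eq_c'c : c' = c by rewrite eq_c'c eqxx in ne_c'c.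
apply: expo_inj => i; move: (sum_ab' i) (sum_ab i); rewrite eq_a'a eq_b'b /expo /= => /eqP; lia.
Qed.

Lemma mulh_support f g (c : mon n t) : mulh t f g c != 0 ->
  exists a : mon n l, exists2 b : mon n m,
    (forall i, expo a i + expo b i = expo c i)%N & g b != 0.
Proof.
move=> nz_fgc.
have /existsP[a /existsP[b /andP[/forallP sum_ab nz_gb]]] :
    [exists a : mon n l, exists b : mon n m,
       [forall i, expo a i + expo b i == expo c i]%N && (g b != 0)].
  apply: contraNT nz_fgc => /existsPn no_factor; rewrite ffunE big1 // => a _.
  apply: big1 => b sum_ab; have [->|nz_gb] := eqVneq (g b) 0; first exact: mulr0.
  by move/existsPn: (no_factor a) => /(_ b); rewrite nz_gb andbT sum_ab.
by exists a; exists b => // i; apply/eqP.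
Qed.

Definition multiples (p : pred (mon n m)) (c : mon n t) : bool :=
  [exists a : mon n l, exists b : mon n m,
     p b && [forall i, expo a i + expo b i == expo c i]%N].

Lemma SmulI_monspan (p : pred (mon n m)) :
  SmulI l t (monspan k p) = monspan k (multiples p).
Proof.
apply/eqP; rewrite eqEsubv; apply/andP; split.
  apply/span_subvP => x /allpairsP[[f g] [_ /vbasis_mem g_in ->]] /=.
  rewrite mem_monspan; apply/forallP => c; apply/implyP; apply: contraNT.
  case/mulh_support => a [b sum_ab nz_gb]; apply/existsP; exists a; apply/existsP; exists b.
  move: g_in; rewrite mem_monspan => /forallP/(_ b).
  rewrite (negbTE nz_gb) implybF negbK => -> /=.
  by apply/forallP => i; rewrite sum_ab.
apply/span_subvP => x /mapP[c]; rewrite mem_filter => /andP[+ _] ->.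
case/existsP => a /existsP[b /andP[pb /forallP sum_ab]].
rewrite -(@mulh_xmon a b) => [|i]; last exact/eqP.
apply: mulh_memv_span; first by rewrite (span_basis (vbasisP _)) memvf.
by rewrite (span_basis (vbasisP _)) xmon_monspan.
Qed.

End Multiplication.

Arguments multiples {n} l {m} t p c.

Lemma sum_count_mem_ord N (s : seq nat) : all (fun x => x < N)%N s ->
  (\sum_(i < N) count_mem (i : nat) s)%N = size s.
Proof.
elim: s => [|x s IH] /=; first by rewrite big1.
case/andP => lt_xN lt_sN; rewrite big_split /= IH // (bigD1 (Ordinal lt_xN)) //=.
rewrite eqxx big1 ?add1n ?addn0 // => i ne_ix.
by rewrite eq_sym -(inj_eq val_inj) /= in ne_ix; rewrite (negbTE ne_ix).
Qed.

Section CountFreeOfLast.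
Variables (n' m : nat).
Local Notation n := n'.+1.

(* A sorted [m]-tuple over ['I_n] encodes a monomial of degree [m] in
   [x_0, ..., x_(n-1)]: the exponent of [x_i] is the multiplicity of [i]. *)
Definition mon_of_tuple (s : m.-tuple 'I_n) : mon n m :=
  mon_of m (fun i => count_mem (i : nat) (map val s)).

Lemma count_mem_map_val_out (s : m.-tuple 'I_n) x :
  (n <= x)%N -> count_mem x (map val s) = 0%N.
Proof.
move=> le_nx; apply/count_memPn/mapP => -[y _ eq_xy].
by move: (ltn_ord y); rewrite -eq_xy ltnNge le_nx.
Qed.

Lemma expo_mon_of_tuple s i :
  expo (mon_of_tuple s) i = count_mem (i : nat) (map val s).
Proof.
rewrite expo_mon_of // sum_count_mem_ord ?size_map ?size_tuple //.
by apply/allP => _ /mapP[y _ ->]; apply: leqW (ltn_ord y).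
Qed.

Lemma mon_of_tuple_free_of_last s : expo (mon_of_tuple s) ord_max = 0%N.
Proof. by rewrite expo_mon_of_tuple count_mem_map_val_out. Qed.

Definition sorted_tuples := [set s : m.-tuple 'I_n | sorted leq (map val s)].

Lemma mon_of_tuple_inj : {in sorted_tuples &, injective mon_of_tuple}.
Proof.
move=> s1 s2; rewrite !inE => sorted_s1 sorted_s2 eq_s12.
apply/val_inj/(inj_map val_inj)/(sorted_eq leq_trans anti_leq sorted_s1 sorted_s2).
apply/allP => x _ /=; have [lt_xn|le_nx] := ltnP x n.+1.
  have := congr1 (fun c => expo c (Ordinal lt_xn)) eq_s12.
  by rewrite !expo_mon_of_tuple => ->.
by rewrite !count_mem_map_val_out // ltnW.
Qed.

Lemma free_of_last_mon_of_tuple (a : mon n m) : expo a ord_max = 0%N ->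
  exists2 s, s \in sorted_tuples & a = mon_of_tuple s.
Proof.
move=> a_free.
pose e (x : 'I_n) := expo a (widen_ord (leqnSn n) x).
pose s0 := flatten [seq nseq (e x) x | x <- enum 'I_n].
have count_s0 (x : 'I_n) : count_mem x s0 = e x.
  rewrite count_flatten sumnE !big_map (bigD1 x) //= count_nseq /= eqxx mul1n.
  by rewrite big1 ?addn0 // => y ne_yx; rewrite count_nseq /= (negbTE ne_yx).
have size_s0 : size s0 = m.
  rewrite size_flatten /shape sumnE !big_map -(sum_expo a) [in RHS]big_ord_recr /=.
  by rewrite a_free addn0; apply: eq_bigr => x _; rewrite size_nseq.
pose s := sort (relpre val leq) s0.
have size_s : size s == m by rewrite size_sort size_s0.
exists (Tuple size_s).
  by rewrite inE /= sorted_map; apply: sort_sorted => x y; apply: leq_total.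
apply: expo_inj => i; rewrite expo_mon_of_tuple /= count_map.
rewrite (permP (permEl (perm_sort _ _))).
have [lt_in|le_ni] := ltnP i n.
  rewrite (eq_count (a2 := pred1 (Ordinal lt_in))) => [|x /=]; last first.
    by rewrite -(inj_eq val_inj).
  by rewrite count_s0 /e; congr expo; apply: val_inj.
have -> : i = ord_max by apply: val_inj; move: (ltn_ord i) le_ni => /=; lia.
rewrite a_free; apply/eqP; rewrite eq_sym -leqn0 leqNgt -has_count; apply/hasPn => x _ /=.
by rewrite neq_ltn ltn_ord.
Qed.

Lemma card_free_of_last_tuple :
  #|[pred c : mon n m | expo c ord_max == 0%N]| = 'C(m + n', m).
Proof.
rewrite -card_sorted_tuples -(card_in_imset mon_of_tuple_inj); apply: eq_card => c.
rewrite !inE; apply/eqP/imsetP => [/free_of_last_mon_of_tuple[s s_sorted ->]|].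
  by exists s.
by case=> s _ ->; apply: mon_of_tuple_free_of_last.
Qed.

End CountFreeOfLast.

Lemma card_free_of_last n m : (0 < n)%N ->
  #|[pred c : mon n m | expo c ord_max == 0%N]| = 'C(n + m - 1, m).
Proof. by case: n => [//|n'] _; rewrite card_free_of_last_tuple addnC subn1. Qed.

Section InitialSegments.
Variables (n t : nat).
Implicit Types (a b c : mon n t) (p : pred (mon n t)).

Lemma revlex_gtE a b : revlex_gt a b = revlex_gtv (expo a) (expo b).
Proof. by []. Qed.

Lemma revlex_gt_irr a : ~~ revlex_gt a a.
Proof. exact: revlex_gtv_irr. Qed.

Lemma revlex_gt_trans b a c : revlex_gt a b -> revlex_gt b c -> revlex_gt a c.
Proof. exact: revlex_gtv_trans. Qed.

Lemma revlex_gt_total a b : a != b -> revlex_gt a b || revlex_gt b a.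
Proof.
move=> ne_ab; apply: revlex_gtv_total; apply/existsP; apply: contraNT ne_ab.
by rewrite negb_exists => /forallP eq_ab; apply/eqP/expo_inj => i; exact/eqP/negbNE/eq_ab.
Qed.

Definition revlex_initial p := forall a b, p b -> revlex_gt a b -> p a.

Lemma revlex_initial_rank r : revlex_initial (fun a => (revlex_rank a < r)%N).
Proof.
move=> a b lt_br gt_ab; apply: ltn_trans lt_br; apply: proper_card; apply/properP.
split; first by apply/subsetP => c; rewrite !inE => gt_ca; apply: revlex_gt_trans gt_ca gt_ab.
by exists a; rewrite !inE ?gt_ab // revlex_gt_irr.
Qed.

Lemma revlex_initialE p : revlex_initial p -> p =1 (fun a => (revlex_rank a < #|p|)%N).
Proof.
move=> p_init a; apply/idP/idP => [pa|].
  rewrite /revlex_rank (cardD1 a p) [a \in p]pa add1n ltnS.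
  apply/subset_leq_card/subsetP => c; rewrite !inE => gt_ca.
  rewrite [c \in p](p_init _ _ pa gt_ca) andbT.
  by apply: contraTneq gt_ca => ->; apply: revlex_gt_irr.
apply: contraTT => not_pa; rewrite -leqNgt /revlex_rank.
apply/subset_leq_card/subsetP => c pc; rewrite inE.
have ne_ca : c != a by apply: contraNneq not_pa => <-.
by case/orP: (revlex_gt_total ne_ca) => // /(p_init _ _ pc); rewrite (negbTE not_pa).
Qed.

Lemma initial_segmentP (k : fieldType) (V : {vspace homog k n t}) :
  initial_segment V <-> exists2 p, revlex_initial p & V = monspan k p.
Proof.
split => [[r ->]|[p p_init ->]].
  by exists (fun a => (revlex_rank a < r)%N) => //; apply: revlex_initial_rank.
by exists #|p|; apply/eq_monspan/revlex_initialE.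
Qed.

End InitialSegments.

Section PenultimatePower.
Variables (n m : nat).
Hypothesis n_gt0 : (0 < n)%N.

Definition pen_var : 'I_n.+1 := inord n.-1.
Definition pen_mon : mon n m := pure_mon m pen_var.

Lemma pen_var_lt_max : (pen_var < @ord_max n)%N.
Proof. by rewrite inordK ?ltnS ?leq_pred //; case: n n_gt0. Qed.

Lemma max_neq_pen_var : (@ord_max n == pen_var) = false.
Proof. by apply/negbTE; rewrite -(inj_eq val_inj) neq_ltn pen_var_lt_max orbT. Qed.

Lemma after_pen_var (j : 'I_n.+1) : (pen_var < j)%N -> j = ord_max.
Proof.
rewrite inordK ?ltnS ?leq_pred // => lt_j.
by apply: val_inj; move: lt_j (ltn_ord j) => /=; lia.
Qed.

Lemma free_of_lastE (c : mon n m) :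
  (expo c ord_max == 0%N) = (c == pen_mon) || revlex_gt c pen_mon.
Proof.
apply/idP/idP => [/eqP c_free|].
  have [->|ne_c] := eqVneq c pen_mon; first by [].
  rewrite revlex_gtE; apply/revlex_gtvP; exists pen_var; split.
    rewrite expo_pure_mon eqxx ltn_neqAle expo_le andbT.
    apply: contra ne_c => /eqP c_pen; apply/eqP/expo_inj => i; rewrite expo_pure_mon.
    case: eqP => [->//|/eqP ne_i]; move: (sum_expo c); rewrite (bigD1 pen_var) //=.
    rewrite c_pen -[RHS]addn0 => /addnI/eqP; rewrite sum_nat_eq0 => /forallP/(_ i).
    by rewrite ne_i => /eqP.
  by move=> j /after_pen_var ->; rewrite expo_pure_mon max_neq_pen_var.
rewrite revlex_gtE; case/orP => [/eqP ->|/revlex_gtvP[i [lt_i eq_after]]].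
  by rewrite expo_pure_mon max_neq_pen_var.
have lt_i_max : (i < @ord_max n)%N.
  by move: lt_i; rewrite expo_pure_mon; case: eqP => // -> _; apply: pen_var_lt_max.
by rewrite eq_after // expo_pure_mon max_neq_pen_var.
Qed.

Lemma revlex_initial_pen_mon (p : pred (mon n m)) : revlex_initial p ->
  p pen_mon = ('C(n + m - 1, m) <= #|p|)%N.
Proof.
move=> p_init; rewrite -card_free_of_last //; apply/idP/idP => [p_pen|].
  apply/subset_leq_card/subsetP => c; rewrite !inE free_of_lastE.
  by case/orP => [/eqP ->//|/p_init]; apply.
apply: contraTT => not_p_pen; rewrite -ltnNge.
set F := [pred c : mon n m | expo c ord_max == 0%N].
have F_pen : pen_mon \in F by rewrite inE free_of_lastE eqxx.
rewrite (cardD1 pen_mon F) F_pen add1n ltnS; apply/subset_leq_card/subsetP => c pc.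
have ne_c : c != pen_mon by apply: contraNneq not_p_pen => <-.
rewrite !inE ne_c free_of_lastE /=.
case/orP: (revlex_gt_total ne_c) => [->|/(p_init _ _ pc)]; first by rewrite orbT.
by rewrite (negbTE not_p_pen).
Qed.

End PenultimatePower.

Section LastPower.
Variables (n m l : nat).
Local Notation last_pow := (@pure_mon n l ord_max).

Definition mul_last (b : mon n m) : mon n (m + l) :=
  mon_of (m + l) (fun i => expo b i + expo last_pow i)%N.

Definition div_last (c : mon n (m + l)) : mon n m :=
  mon_of m (fun i => expo c i - expo last_pow i)%N.

Lemma expo_mul_last b i : expo (mul_last b) i = (expo b i + expo last_pow i)%N.
Proof. by rewrite expo_mon_of // big_split /= !sum_expo. Qed.

Lemma expo_last_pow_le (c : mon n (m + l)) i :
  (l <= expo c ord_max)%N -> (expo last_pow i <= expo c i)%N.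
Proof. by rewrite expo_pure_mon; case: eqP => [->|]. Qed.

Lemma expo_div_last c i : (l <= expo c ord_max)%N ->
  expo (div_last c) i = (expo c i - expo last_pow i)%N.
Proof.
move=> le_lc; rewrite expo_mon_of // sumnB => [|j _]; last exact: expo_last_pow_le.
by rewrite !sum_expo addnK.
Qed.

Lemma mul_last_high b : (l <= expo (mul_last b) ord_max)%N.
Proof. by rewrite expo_mul_last expo_pure_mon eqxx leq_addl. Qed.

Lemma mul_lastK : cancel mul_last div_last.
Proof.
by move=> b; apply: expo_inj => i; rewrite expo_div_last ?mul_last_high // expo_mul_last addnK.
Qed.

Lemma div_lastK c : (l <= expo c ord_max)%N -> mul_last (div_last c) = c.
Proof.
move=> le_lc; apply: expo_inj => i.
by rewrite expo_mul_last expo_div_last // subnK // expo_last_pow_le.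
Qed.

Lemma revlex_gt_mul_last b b' : revlex_gt (mul_last b) (mul_last b') = revlex_gt b b'.
Proof. by rewrite !revlex_gtE; apply: revlex_gtv_addr => i; rewrite expo_mul_last. Qed.

End LastPower.

Arguments mul_last {n m} l b.
Arguments div_last {n m} l c.

Section Multiples.
Variables (n m l : nat).
Hypothesis n_gt0 : (0 < n)%N.
Variable p : pred (mon n m).
Hypothesis p_init : revlex_initial p.

Local Notation Q := (multiples l (m + l) p).
Local Notation last_pow := (@pure_mon n l ord_max).

Lemma multiples_mul_last b : p b -> Q (mul_last l b).
Proof.
move=> pb; apply/existsP; exists last_pow; apply/existsP; exists b.
by rewrite pb; apply/forallP => i; rewrite expo_mul_last addnC.
Qed.

Section ContainsPenMon.
Hypothesis p_pen : p (pen_mon n m).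

Lemma free_of_last_in c : expo c ord_max = 0%N -> p c.
Proof.
move/eqP; rewrite free_of_lastE //.
by case/orP => [/eqP ->//|/p_init]; apply.
Qed.

(* Here [x_n^l] does not divide [c], so [c] is a multiple of a monomial free of [x_n]. *)
Lemma multiples_low c : (expo c ord_max < l)%N -> Q c.
Proof.
move=> lt_cl.
pose e (i : 'I_n.+1) := if i == ord_max then 0%N else expo c i.
have le_m_e : (m <= \sum_i e i)%N.
  rewrite (bigD1 ord_max) //= /e eqxx add0n (eq_bigr (expo c)) => [|i /negbTE -> //].
  by move: (sum_expo c); rewrite (bigD1 ord_max) //=; lia.
have [h le_he sum_h] := exists_minor_sum le_m_e.
have le_hc i : (h i <= expo c i)%N by apply: leq_trans (le_he i) _; rewrite /e; case: eqP.
have sum_ch : (\sum_i (expo c i - h i) = l)%N by rewrite sumnB // sum_expo sum_h addKn.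
apply/existsP; exists (mon_of l (fun i => expo c i - h i)%N).
apply/existsP; exists (mon_of m h); apply/andP; split.
  apply: free_of_last_in; rewrite expo_mon_of //; apply/eqP.
  by move: (le_he ord_max); rewrite /e eqxx leqn0.
by apply/forallP => i; rewrite !expo_mon_of // subnK.
Qed.

Lemma multiples_high c : (l <= expo c ord_max)%N -> Q c = p (div_last l c).
Proof.
move=> le_lc; apply/idP/idP => [|pc]; last by rewrite -(div_lastK le_lc) multiples_mul_last.
case/existsP => a /existsP[b /andP[pb /forallP sum_ab]].
have {}sum_ab i : (expo a i + expo b i = expo c i)%N by apply/eqP/sum_ab.
have [lt_al|ge_al] := ltnP (expo a ord_max) l.
  apply: p_init pb _; rewrite revlex_gtE; apply/revlex_gtvP; exists ord_max; split.
    by rewrite expo_div_last // expo_pure_mon eqxx; move: (sum_ab ord_max); lia.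
  by move=> j; rewrite ltnNge -ltnS ltn_ord.
have a_last : a = last_pow.
  have a_max : expo a ord_max = l by apply/anti_leq; rewrite ge_al expo_le.
  have /eqP : (\sum_(i | i != ord_max) expo a i = 0)%N.
    by move: (sum_expo a); rewrite (bigD1 ord_max) //= a_max; lia.
  rewrite sum_nat_eq0 => /forallP a_rest; apply: expo_inj => i.
  by rewrite expo_pure_mon; case: eqP => [->//|/eqP ne_i]; apply/eqP/(implyP (a_rest i)).
suff -> : div_last l c = b by [].
by apply: expo_inj => i; rewrite expo_div_last // -sum_ab a_last addKn.
Qed.

Lemma revlex_initial_multiples : revlex_initial Q.
Proof.
move=> d c Qc gt_dc; have [lt_dl|le_ld] := ltnP (expo d ord_max) l.
  exact: multiples_low.
have le_lc : (l <= expo c ord_max)%N.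
  move: gt_dc; rewrite revlex_gtE => /revlex_gtvP[i [lt_i eq_after]].
  have [eq_i|ne_i] := eqVneq i ord_max.
    by move: lt_i; rewrite eq_i => /ltnW; apply: leq_trans.
  by rewrite -eq_after //; move: ne_i (ltn_ord i); rewrite -(inj_eq val_inj) /=; lia.
rewrite multiples_high // in Qc; rewrite multiples_high //; apply: (p_init Qc).
by rewrite -(revlex_gt_mul_last l) !div_lastK.
Qed.

Lemma card_predC_multiples : #|[pred c | ~~ Q c]| = #|[pred b | ~~ p b]|.
Proof.
rewrite -[RHS](card_imset _ (can_inj (@mul_lastK n m l))); apply: eq_card => c.
rewrite !inE; apply/idP/imsetP => [not_Qc|[b]]; last first.
  by rewrite inE => not_pb ->; rewrite multiples_high ?mul_last_high // mul_lastK.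
have le_lc : (l <= expo c ord_max)%N.
  by rewrite leqNgt; apply: contra not_Qc; apply: multiples_low.
by exists (div_last l c); rewrite ?div_lastK // inE -multiples_high.
Qed.

End ContainsPenMon.

Lemma not_revlex_initial_multiples :
  ~~ p (pen_mon n m) -> (exists b, p b) -> (0 < l)%N -> ~ revlex_initial Q.
Proof.
move=> not_p_pen [b pb] l_gt0 Q_init.
have /existsP[a /existsP[b' /andP[pb' /forallP sum_ab']]] : Q (pen_mon n (m + l)).
  apply: Q_init (multiples_mul_last pb) _; rewrite revlex_gtE; apply/revlex_gtvP.
  exists ord_max; split; last by move=> j; rewrite ltnNge -ltnS ltn_ord.
  rewrite expo_pure_mon max_neq_pen_var // expo_mul_last expo_pure_mon eqxx.
  by rewrite addn_gt0 l_gt0 orbT.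
suff eq_b' : b' = pen_mon n m by rewrite -eq_b' pb' in not_p_pen.
have b'_rest i : i != pen_var n -> expo b' i = 0%N.
  move=> ne_i; apply/eqP; rewrite -leqn0; move/eqP: (sum_ab' i) => /(congr1 (leq (expo b' i))).
  by rewrite leq_addl expo_pure_mon (negbTE ne_i) => <-.
apply: expo_inj => i; rewrite expo_pure_mon; case: eqP => [->|/eqP/b'_rest //].
by move: (sum_expo b'); rewrite (bigD1 (pen_var n)) //= big1 ?addn0 // => j /b'_rest.
Qed.

Lemma revlex_initial_multiplesP : (exists b, p b) -> (0 < l)%N ->
  revlex_initial Q <-> p (pen_mon n m).
Proof.
move=> p_nz l_gt0; split => [Q_init|]; last exact: revlex_initial_multiples.
by apply: contraT => not_p_pen; case: (not_revlex_initial_multiples not_p_pen p_nz l_gt0).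
Qed.

End Multiples.

Section InitialSegmentProducts.
Variables (k : fieldType) (n m l : nat).
Hypothesis n_gt0 : (0 < n)%N.
Variable p : pred (mon n m).
Hypothesis p_init : revlex_initial p.

Lemma initial_segment_SmulIP : (exists b, p b) -> (0 < l)%N ->
  initial_segment (SmulI l (m + l) (monspan k p)) <-> p (pen_mon n m).
Proof.
move=> p_nz l_gt0; rewrite SmulI_monspan -(@revlex_initial_multiplesP _ _ l) //.
split=> [/initial_segmentP[q q_init /monspan_inj eq_q] d c|Q_init].
  by rewrite !eq_q; apply: q_init.
by apply/initial_segmentP; exists (multiples l (m + l) p).
Qed.

Lemma codim_SmulI : p (pen_mon n m) ->
  (\dim (fullv : {vspace homog k n m}) - \dim (monspan k p)
   = \dim (fullv : {vspace homog k n (m + l)}) - \dim (SmulI l (m + l) (monspan k p)))%N.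
Proof.
move=> p_pen; rewrite SmulI_monspan !dim_monspan !dim_homog -(cardC p).
rewrite -(cardC (multiples l (m + l) p)) !addKn.
have card_predC (T : finType) (P : pred T) : #|[predC P]| = #|[pred x | ~~ P x]|.
  by apply: eq_card => x; rewrite !inE.
by rewrite !card_predC card_predC_multiples.
Qed.

End InitialSegmentProducts.

(* The factor of [c] coming from [g] has degree [d <= m]; it is enlarged to a
   degree-[m] monomial of [p] by borrowing [m - d] from the other factor. *)
Lemma mulh_mem_multiples (k : fieldType) n m (p : pred (mon n m)) l d
    (f : homog k n (m + l - d)) (g : homog k n d) : (d <= m)%N ->
  (forall h : mon n (m - d), mulh m (xmon k h) g \in monspan k p) ->
  mulh (m + l) f g \in monspan k (multiples l (m + l) p).
Proof.
move=> le_dm hg_in; rewrite mem_monspan; apply/forallP => c; apply/implyP.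
apply: contraNT => /mulh_support[a [b sum_ab nz_gb]].
have [h le_ha sum_h] : exists2 h : 'I_n.+1 -> nat,
    (forall i, h i <= expo a i)%N & (\sum_i h i = m - d)%N.
  by apply: exists_minor_sum; rewrite sum_expo; lia.
have sum_hb : (\sum_i (h i + expo b i) = m)%N by rewrite big_split /= sum_h sum_expo subnK.
have sum_ah : (\sum_i (expo a i - h i) = l)%N by rewrite sumnB // sum_expo sum_h; lia.
set hb := mon_of m (fun i => h i + expo b i)%N.
have p_hb : p hb.
  move: (hg_in (mon_of (m - d) h)); rewrite mem_monspan => /forallP/(_ hb).
  rewrite (@mulh_xmonl_coef _ _ _ _ _ _ _ _ b) => [|i]; last by rewrite !expo_mon_of.
  by rewrite (negbTE nz_gb) implybF negbK.
apply/existsP; exists (mon_of l (fun i => expo a i - h i)%N).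
apply/existsP; exists hb; rewrite p_hb.
by apply/forallP => i; rewrite !expo_mon_of // addnA subnK // sum_ab.
Qed.

Section GeneratedIdeal.
Variables (k : fieldType) (n m : nat) (J : forall t, {vspace homog k n t}).
Hypothesis J_ideal : forall (l t : nat) (f : homog k n l) (g : homog k n t),
  g \in J t -> mulh (l + t) f g \in J (l + t).

Lemma SmulI_sub_ideal l : (SmulI l (m + l) (J m) <= J (m + l))%VS.
Proof.
apply/span_subvP => x /allpairsP[[f g] [_ /vbasis_mem g_in ->]] /=.
by rewrite [(m + l)%N]addnC; apply: J_ideal.
Qed.

Hypothesis J_gen : forall t : nat,
  J t = (\sum_(d < (minn t m).+1) SmulI (t - d) t (J d))%VS.
Variable p : pred (mon n m).
Hypothesis J_m : J m = monspan k p.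

Lemma ideal_component_high l : J (m + l) = SmulI l (m + l) (J m).
Proof.
apply/eqP; rewrite eqEsubv SmulI_sub_ideal andbT [J (m + l)]J_gen.
apply/subv_sumP => d _; rewrite J_m SmulI_monspan.
have le_dm : (d <= m)%N by rewrite -ltnS (leq_trans (ltn_ord d)) // ltnS geq_minr.
apply/span_subvP => x /allpairsP[[f g] [_ /vbasis_mem g_in ->]] /=.
apply: mulh_mem_multiples => // h; rewrite -J_m.
by have := J_ideal (xmon k h) g_in; rewrite subnK.
Qed.

End GeneratedIdeal.

Unset Implicit Arguments.

Theorem mainTheorem12 (k : closedFieldType) (Hchar : [pchar k] =i pred0)
  (n m : nat) (Hn : (1 <= n)%N) (Hm : (1 <= m)%N)
  (I : {vspace (homog k n m)}) (HI0 : I != 0%VS) (HIseg : initial_segment I) :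
  let xnm := xmon k (@pure_mon n m (inord n.-1)) in
  (* (1) *)
  ((forall l : nat, (0 < l)%N ->
      (initial_segment (SmulI l (m + l) I) <-> ('C(n + m - 1, m) <= \dim I)%N))
   /\ (('C(n + m - 1, m) <= \dim I)%N <-> xnm \in I))
  /\
  (* (2) *)
  (xnm \in I ->
     (forall l : nat,
        (\dim (fullv : {vspace (homog k n m)}) - \dim I
         = \dim (fullv : {vspace (homog k n (m + l))}) - \dim (SmulI l (m + l) I))%N)
     /\
     (forall J : forall t : nat, {vspace (homog k n t)},
        (* J is an ideal *)
        (forall (l t : nat) (f : homog k n l) (g : homog k n t),
            g \in J t -> mulh (l + t)%N f g \in J (l + t)%N) ->
        (* J is generated in degrees <= m *)
        (forall t : nat,
            J t = (\sum_(d < (minn t m).+1) SmulI (t - d) t (J d))%VS) ->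
        J m = I ->
        (* the Hilbert polynomial of S/J is constant *)
        exists c N : nat, forall t : nat, (N <= t)%N ->
          (\dim (fullv : {vspace (homog k n t)}) - \dim (J t))%N = c)).
Proof.
move=> xnm; have [p p_init I_p] := (initial_segmentP I).1 HIseg.
have xnm_in : (xnm \in I) = p (pen_mon n m) by rewrite I_p xmon_monspan.
have dimI_ge : ('C(n + m - 1, m) <= \dim I)%N = p (pen_mon n m).
  by rewrite I_p dim_monspan revlex_initial_pen_mon.
have /card_gt0P[b pb] : (0 < #|p|)%N by rewrite -(dim_monspan k) -I_p lt0n dimv_eq0.
split; first split.
- by move=> l l_gt0; rewrite dimI_ge I_p; apply: initial_segment_SmulIP => //; exists b.
- by rewrite dimI_ge xnm_in.
rewrite xnm_in => p_pen.
have codim l := codim_SmulI k l Hn p_init p_pen.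
split=> [l|J J_ideal J_gen J_m]; first by rewrite I_p (codim l).
exists (\dim (fullv : {vspace homog k n m}) - \dim I)%N, m => t le_mt.
rewrite -(subnKC le_mt) (ideal_component_high J_ideal J_gen (etrans J_m I_p)).
by rewrite J_m I_p (codim (t - m)%N).
Qed.
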